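(* Let $\varphi:\mathcal A\to\mathcal A$ be a continuous multiplicative map (i.e. $\varphi(AB)=\varphi(A)\varphi(B)$ for all $A,B\in\mathcal A$, not assumed linear) such that $\varphi(S)=S$ and $\varphi(\alpha I)=\alpha I$ for every $\alpha\in\mathbb C$. Then $\varphi$ is the identity map on $\mathcal A$.
   Context: $S$ denotes the $n\times n$ nilpotent Jordan block with ones on the superdiagonal and zeros elsewhere. $\mathcal A=\{f(S): f\text{ a complex polynomial}\}$ is the algebra of $n\times n$ upper-triangular Toeplitz matrices, equipped with the operator norm (induced by the Euclidean norm on $\mathbb C^n$). *)

From Stdlib Require Import Reals List ClassicalEpsilon.
Open Scope R_scope.

Definition Cx : Type := (R * R)%type.
Definition C0 : Cx := (0, 0).
Definition C1 : Cx := (1, 0).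
Definition Cadd (z w : Cx) : Cx := (fst z + fst w, snd z + snd w).
Definition Copp (z : Cx) : Cx := (- fst z, - snd z).
Definition Csub (z w : Cx) : Cx := Cadd z (Copp w).
Definition Cmul (z w : Cx) : Cx :=
  (fst z * fst w - snd z * snd w, fst z * snd w + snd z * fst w).
Definition Cnorm2 (z : Cx) : R := fst z * fst z + snd z * snd z.

Fixpoint Csum (k : nat) (f : nat -> Cx) : Cx :=
  match k with O => C0 | S k' => Cadd (Csum k' f) (f k') end.
Fixpoint Rsum (k : nat) (f : nat -> R) : R :=
  match k with O => 0 | S k' => Rsum k' f + f k' end.

(** n x n complex matrices, represented as functions on indices; only
    entries with indices < n are meaningful (elements of the algebra below
    vanish outside the n x n block). *)
Definition Mat : Type := nat -> nat -> Cx.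
Definition Vec : Type := nat -> Cx.

Definition mzero : Mat := fun _ _ => C0.
Definition madd (M N : Mat) : Mat := fun i j => Cadd (M i j) (N i j).
Definition msub (M N : Mat) : Mat := fun i j => Csub (M i j) (N i j).
Definition mmul (n : nat) (M N : Mat) : Mat :=
  fun i j => Csum n (fun k => Cmul (M i k) (N k j)).

Definition mscalar (n : nat) (a : Cx) : Mat :=
  fun i j => if (Nat.eqb i j && Nat.ltb i n)%bool then a else C0.

Definition Sblock (n : nat) : Mat :=
  fun i j => if (Nat.eqb j (S i) && Nat.ltb j n)%bool then C1 else C0.

(** f(S) for the polynomial f with coefficient list [a0; a1; ...]
    (Horner scheme: a0 I + S (a1 I + S (...))). *)
Fixpoint poly_of_S (n : nat) (c : list Cx) : Mat :=
  match c with
  | nil => mzero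
  | a :: c' => madd (mscalar n a) (mmul n (Sblock n) (poly_of_S n c'))
  end.

Definition inA (n : nat) (M : Mat) : Prop := exists c : list Cx, M = poly_of_S n c.

Definition vnorm (n : nat) (x : Vec) : R := sqrt (Rsum n (fun i => Cnorm2 (x i))).
Definition mapply (n : nat) (M : Mat) (x : Vec) : Vec :=
  fun i => Csum n (fun k => Cmul (M i k) (x k)).

Definition opnorm_set (n : nat) (M : Mat) : R -> Prop :=
  fun t => exists x : Vec, vnorm n x <= 1 /\ t = vnorm n (mapply n M x).

Definition opnorm (n : nat) (M : Mat) : R :=
  epsilon (inhabits 0) (fun r => is_lub (opnorm_set n M) r).

Definition continuous_on_A (n : nat) (phi : Mat -> Mat) : Prop :=
  forall A, inA n A -> forall eps, 0 < eps ->
    exists delta, 0 < delta /\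
      forall B, inA n B -> opnorm n (msub B A) < delta ->
        opnorm n (msub (phi B) (phi A)) < eps.

(* Via [f(S) <-> (a_0, ..., a_(n-1))] the algebra is that of power series truncated
   at degree [n]; let [Phi] be the map induced by [phi] on coefficient sequences.
   Since [phi] fixes scalars and [S], it commutes with multiplication by [S^p]; shifting
   coefficient [k] to the last position shows that it depends only on [a_0, ..., a_k].
   We show by induction on [k] that [Phi] fixes coefficient [k]. When [a_0 = 0] the
   sequence is [S] times one whose coefficients of index [< k] already determine it;
   otherwise we normalize to [a_0 = 1]. On such unipotent series the deviation of
   coefficient [k] is additive, and peeling off factors [1 + x S^j] from the top degree
   down reduces it to an additive function of [x]. Continuity of [phi] at [w], tested
   on [w + I/m -> w], forces that function to vanish. *)

From Pilot Require Import Defs.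
From Stdlib Require Import Reals List ClassicalEpsilon Classical Lia Lra FunctionalExtensionality.
From Coquelicot Require Complex.
(* Re-imported so that [C1] denotes the complex unit of Defs, not Reals' [C1]. *)
Import Defs.
Open Scope R_scope.

Lemma Cx_eq (z w : Cx) : fst z = fst w -> snd z = snd w -> z = w.
Proof. destruct z, w; simpl; intros; subst; reflexivity. Qed.

Lemma Cx_ring : ring_theory C0 C1 Cadd Cmul Csub Copp (@eq Cx).
Proof.
  constructor; intros; repeat match goal with x : Cx |- _ => destruct x end;
  unfold C0, C1, Cadd, Cmul, Csub, Copp; simpl; apply Cx_eq; simpl; ring.
Qed.
Add Ring Cx_ring : Cx_ring.

Definition Creal (x : R) : Cx := (x, 0).

Lemma Creal_mul x y : Cmul (Creal x) (Creal y) = Creal (x * y).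
Proof. apply Cx_eq; simpl; ring. Qed.

Lemma Cnorm2_ge0 z : 0 <= Cnorm2 z.
Proof. unfold Cnorm2. nra. Qed.

Lemma Cnorm2_neq0 z : z <> C0 -> Cnorm2 z <> 0.
Proof.
  intros Hz H. apply Hz. destruct z as [x y]. unfold Cnorm2 in H; simpl in H.
  assert (x = 0) by nra. assert (y = 0) by nra. subst. reflexivity.
Qed.

Definition Cinv (z : Cx) : Cx := (fst z / Cnorm2 z, - snd z / Cnorm2 z).

Lemma Cinv_l z : z <> C0 -> Cmul (Cinv z) z = C1.
Proof.
  intros Hz. pose proof (Cnorm2_neq0 z Hz).
  destruct z as [x y]. unfold Cinv, Cmul, C1, Cnorm2 in *; simpl in *.
  apply Cx_eq; simpl; field; auto.
Qed.

Definition Cabs (z : Cx) : R := sqrt (Cnorm2 z).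

Lemma Cabs_Cmod z : Cabs z = Complex.Cmod z.
Proof. unfold Cabs, Complex.Cmod, Cnorm2. f_equal. simpl. ring. Qed.

Lemma Cabs_ge0 z : 0 <= Cabs z.
Proof. apply sqrt_pos. Qed.

Lemma Cabs_gt0 z : z <> C0 -> 0 < Cabs z.
Proof.
  intros Hz. apply sqrt_lt_R0.
  pose proof (Cnorm2_neq0 z Hz). pose proof (Cnorm2_ge0 z). lra.
Qed.

Lemma Cabs_sqr z : Cabs z * Cabs z = Cnorm2 z.
Proof. apply sqrt_sqrt, Cnorm2_ge0. Qed.

Lemma Cabs_add z w : Cabs (Cadd z w) <= Cabs z + Cabs w.
Proof. rewrite !Cabs_Cmod. apply Complex.Cmod_triangle. Qed.

Lemma Cabs_mul z w : Cabs (Cmul z w) = Cabs z * Cabs w.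
Proof. rewrite !Cabs_Cmod. apply Complex.Cmod_mult. Qed.

Lemma Cabs_C0 : Cabs C0 = 0.
Proof. unfold Cabs, Cnorm2, C0; simpl. replace (0 * 0 + 0 * 0) with 0 by ring. apply sqrt_0. Qed.

Lemma Cabs_Creal x : 0 <= x -> Cabs (Creal x) = x.
Proof.
  intros Hx. unfold Cabs, Cnorm2; simpl.
  replace (x * x + 0 * 0) with (Rsqr x) by (unfold Rsqr; ring). apply sqrt_Rsqr, Hx.
Qed.

Lemma Csum_ext k f g : (forall q, (q < k)%nat -> f q = g q) -> Csum k f = Csum k g.
Proof.
  induction k; simpl; intros H; [reflexivity|].
  rewrite IHk by (intros; apply H; lia). rewrite H by lia. reflexivity.
Qed.

Lemma Csum_zero k f : (forall q, (q < k)%nat -> f q = C0) -> Csum k f = C0.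
Proof.
  induction k; simpl; intros H; [reflexivity|].
  rewrite IHk by (intros; apply H; lia). rewrite H by lia. ring.
Qed.

Lemma Csum_add_range i m f :
  Csum (i + m) f = Cadd (Csum i f) (Csum m (fun p => f (i + p)%nat)).
Proof.
  induction m; simpl.
  - rewrite Nat.add_0_r. ring.
  - rewrite Nat.add_succ_r. simpl. rewrite IHm. ring.
Qed.

Lemma Csum_sub k f g : Csum k (fun q => Csub (f q) (g q)) = Csub (Csum k f) (Csum k g).
Proof. induction k; simpl; [ring|]. rewrite IHk. ring. Qed.

Lemma Csum_single k f p : (p < k)%nat ->
  (forall q, (q < k)%nat -> q <> p -> f q = C0) -> Csum k f = f p.
Proof.
  induction k; intros Hp H; [lia|]. simpl. destruct (Nat.eq_dec p k).
  - subst. rewrite Csum_zero by (intros; apply H; lia). ring.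
  - rewrite IHk by (try lia; intros; apply H; lia). rewrite (H k) by lia. ring.
Qed.

Lemma Csum_ends k f : (1 <= k)%nat -> (forall q, (0 < q < k)%nat -> f q = C0) ->
  Csum (S k) f = Cadd (f O) (f k).
Proof.
  intros Hk H. simpl. f_equal. apply Csum_single; [lia|]. intros; apply H; lia.
Qed.

Lemma Cabs_Csum k f : Cabs (Csum k f) <= Rsum k (fun q => Cabs (f q)).
Proof.
  induction k; simpl; [rewrite Cabs_C0; lra|].
  pose proof (Cabs_add (Csum k f) (f k)). lra.
Qed.

Lemma Rsum_ext k f g : (forall q, (q < k)%nat -> f q = g q) -> Rsum k f = Rsum k g.
Proof.
  induction k; simpl; intros H; [reflexivity|].
  rewrite IHk by (intros; apply H; lia). rewrite H by lia. reflexivity.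
Qed.

Lemma Rsum_le k f g : (forall q, (q < k)%nat -> f q <= g q) -> Rsum k f <= Rsum k g.
Proof.
  induction k; simpl; intros H; [lra|].
  assert (f k <= g k) by (apply H; lia).
  assert (Rsum k f <= Rsum k g) by (apply IHk; intros; apply H; lia). lra.
Qed.

Lemma Rsum_ge0 k f : (forall q, (q < k)%nat -> 0 <= f q) -> 0 <= Rsum k f.
Proof.
  intros H. apply Rle_trans with (Rsum k (fun _ => 0)).
  - clear. induction k; simpl; lra.
  - apply Rsum_le, H.
Qed.

Lemma Rsum_ge_term k f p : (p < k)%nat -> (forall q, (q < k)%nat -> 0 <= f q) ->
  f p <= Rsum k f.
Proof.
  induction k; intros Hp H; [lia|]. simpl.
  assert (0 <= Rsum k f) by (apply Rsum_ge0; intros; apply H; lia).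
  destruct (Nat.eq_dec p k); [subst; lra|].
  assert (f p <= Rsum k f) by (apply IHk; [lia | intros; apply H; lia]).
  assert (0 <= f k) by (apply H; lia). lra.
Qed.

Lemma Rsum_single k f p : (p < k)%nat ->
  (forall q, (q < k)%nat -> q <> p -> f q = 0) -> Rsum k f = f p.
Proof.
  induction k; intros Hp H; [lia|]. simpl. destruct (Nat.eq_dec p k).
  - subst. rewrite (Rsum_ext k f (fun _ => 0)) by (intros; apply H; lia).
    clear. induction k; simpl; lra.
  - rewrite IHk by (try lia; intros; apply H; lia). rewrite (H k) by lia. ring.
Qed.

Lemma Rsum_const k c : Rsum k (fun _ => c) = INR k * c.
Proof. induction k; simpl Rsum; [simpl; ring|]. rewrite IHk, S_INR; ring. Qed.

(** * Upper triangular Toeplitz matrices *)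

(* [toep n a] is the element [sum_k a_k S^k] of the algebra. *)
Definition toep (n : nat) (a : nat -> Cx) : Mat :=
  fun i j => if (Nat.leb i j && Nat.ltb j n)%bool then a (j - i)%nat else C0.

Lemma toep_in n a i j : (i <= j)%nat -> (j < n)%nat -> toep n a i j = a (j - i)%nat.
Proof.
  intros; unfold toep.
  destruct (Nat.leb_spec i j); destruct (Nat.ltb_spec j n); simpl; auto; lia.
Qed.

Lemma toep_out n a i j : ~ ((i <= j)%nat /\ (j < n)%nat) -> toep n a i j = C0.
Proof.
  intros; unfold toep.
  destruct (Nat.leb_spec i j); destruct (Nat.ltb_spec j n); simpl; auto; lia.
Qed.

Lemma toep_row0 n a i : (i < n)%nat -> toep n a O i = a i.
Proof. intros; rewrite toep_in, Nat.sub_0_r by lia. reflexivity. Qed.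

Lemma toep_ext n a b : (forall i, (i < n)%nat -> a i = b i) -> toep n a = toep n b.
Proof.
  intros H. extensionality i; extensionality j. unfold toep.
  destruct (Nat.leb_spec i j); destruct (Nat.ltb_spec j n); simpl; auto. apply H; lia.
Qed.

Definition conv (a b : nat -> Cx) (k : nat) : Cx :=
  Csum (S k) (fun q => Cmul (a q) (b (k - q)%nat)).

Lemma conv_ext a a' b b' k :
  (forall q, (q <= k)%nat -> a q = a' q) -> (forall q, (q <= k)%nat -> b q = b' q) ->
  conv a b k = conv a' b' k.
Proof. intros Ha Hb. apply Csum_ext. intros q Hq. rewrite Ha, Hb by lia. reflexivity. Qed.

Lemma toep_mul n a b : mmul n (toep n a) (toep n b) = toep n (conv a b).
Proof.
  extensionality i; extensionality j. unfold mmul.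
  destruct (Compare_dec.le_dec i j) as [Hij|Hij];
    [destruct (Compare_dec.lt_dec j n) as [Hj|Hj]|].
  - rewrite toep_in by lia.
    replace n with (i + S (j - i) + (n - S j))%nat at 1 by lia.
    rewrite !Csum_add_range, (Csum_zero i), (Csum_zero (n - S j)).
    + unfold conv. rewrite (Csum_ext _ _ (fun q => Cmul (a q) (b (j - i - q)%nat))); [ring|].
      intros q Hq. rewrite !toep_in by lia. f_equal; f_equal; lia.
    + intros q Hq. rewrite (toep_out n b); [ring|lia].
    + intros q Hq. rewrite (toep_out n a); [ring|lia].
  - rewrite toep_out by lia. apply Csum_zero. intros q Hq.
    rewrite (toep_out n b); [ring|lia].
  - rewrite toep_out by lia. apply Csum_zero. intros q Hq.
    destruct (Compare_dec.le_dec i q).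
    + rewrite (toep_out n b); [ring|lia].
    + rewrite (toep_out n a); [ring|lia].
Qed.

Lemma msub_toep n a b : msub (toep n a) (toep n b) = toep n (fun i => Csub (a i) (b i)).
Proof.
  extensionality i; extensionality j. unfold msub, toep.
  destruct (Nat.leb_spec i j); destruct (Nat.ltb_spec j n); simpl; auto; ring.
Qed.

(* The coefficient sequence of [v S^p]. *)
Definition mono (p : nat) (v : Cx) : nat -> Cx := fun i => if Nat.eqb i p then v else C0.

Lemma mono_eq p v : mono p v p = v.
Proof. unfold mono; rewrite Nat.eqb_refl; reflexivity. Qed.

Lemma mono_neq p v i : i <> p -> mono p v i = C0.
Proof. intros H; unfold mono; destruct (Nat.eqb_spec i p); [lia|reflexivity]. Qed.

Lemma conv_mono_l p t a k :
  conv (mono p t) a k = if Nat.leb p k then Cmul t (a (k - p)%nat) else C0.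
Proof.
  unfold conv. destruct (Nat.leb_spec p k).
  - rewrite (Csum_single _ _ p), mono_eq; [reflexivity|lia|].
    intros q _ Hq. rewrite mono_neq by auto. ring.
  - apply Csum_zero. intros q Hq. rewrite mono_neq by lia. ring.
Qed.

Lemma conv_const_l t a k : conv (mono 0 t) a k = Cmul t (a k).
Proof. rewrite conv_mono_l, Nat.sub_0_r. reflexivity. Qed.

Lemma Sblock_toep n : Sblock n = toep n (mono 1 C1).
Proof.
  extensionality i; extensionality j. unfold Sblock, toep, mono.
  destruct (Nat.eqb_spec j (S i)); destruct (Nat.ltb_spec j n); destruct (Nat.leb_spec i j);
  destruct (Nat.eqb_spec (j - i) 1); simpl; auto; lia.
Qed.

Lemma mscalar_toep n a : mscalar n a = toep n (mono 0 a).
Proof.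
  extensionality i; extensionality j. unfold mscalar, toep, mono.
  destruct (Nat.eqb_spec i j); destruct (Nat.ltb_spec i n); destruct (Nat.ltb_spec j n);
  destruct (Nat.leb_spec i j); destruct (Nat.eqb_spec (j - i) 0); simpl; auto; lia.
Qed.

Lemma poly_of_S_toep n c : poly_of_S n c = toep n (fun i => nth i c C0).
Proof.
  induction c as [|a c IH]; simpl.
  - extensionality i; extensionality j. unfold mzero, toep.
    destruct (_ && _)%bool; [destruct (j - i)%nat|]; reflexivity.
  - rewrite IH, Sblock_toep, mscalar_toep, toep_mul.
    extensionality i; extensionality j. unfold madd, toep.
    destruct (_ && _)%bool; [|ring].
    rewrite conv_mono_l. unfold mono. destruct (j - i)%nat; simpl; [|rewrite Nat.sub_0_r]; ring.
Qed.

Lemma inA_toep n M : inA n M -> M = toep n (fun i => M O i).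
Proof.
  intros [c ->]. rewrite poly_of_S_toep. apply toep_ext. intros i Hi.
  rewrite toep_row0 by lia. reflexivity.
Qed.

Lemma toep_inA n a : inA n (toep n a).
Proof.
  exists (map a (seq 0 n)). rewrite poly_of_S_toep. apply toep_ext. intros i Hi.
  rewrite (nth_indep _ C0 (a O)) by (rewrite length_map, length_seq; lia).
  rewrite map_nth, seq_nth by lia. reflexivity.
Qed.

(** * The operator norm *)

(* A crude a priori bound: it makes [opnorm_set] bounded, so that the
   supremum chosen by [epsilon] in [opnorm] exists. *)
Definition row_abs_bound (n : nat) (M : Mat) : R :=
  sqrt (Rsum n (fun i => Rsqr (Rsum n (fun q => Cabs (M i q))))).

Lemma vnorm_mapply_le n M x : vnorm n x <= 1 -> vnorm n (mapply n M x) <= row_abs_bound n M.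
Proof.
  intros Hx.
  assert (Hsum : Rsum n (fun i => Cnorm2 (x i)) <= 1).
  { unfold vnorm in Hx.
    assert (0 <= Rsum n (fun i => Cnorm2 (x i))) by (apply Rsum_ge0; intros; apply Cnorm2_ge0).
    pose proof (sqrt_sqrt _ H). pose proof (sqrt_pos (Rsum n (fun i => Cnorm2 (x i)))). nra. }
  assert (Hcoord : forall q, (q < n)%nat -> Cabs (x q) <= 1).
  { intros q Hq.
    pose proof (Rsum_ge_term n (fun i => Cnorm2 (x i)) q Hq (fun i _ => Cnorm2_ge0 (x i))).
    pose proof (Cabs_sqr (x q)). pose proof (Cabs_ge0 (x q)). simpl in *. nra. }
  apply sqrt_le_1_alt, Rsum_le. intros i Hi.
  rewrite <- Cabs_sqr.
  apply Rsqr_incr_1; [| apply Cabs_ge0 | apply Rsum_ge0; intros; apply Cabs_ge0].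
  eapply Rle_trans; [apply Cabs_Csum|]. apply Rsum_le. intros q Hq.
  rewrite Cabs_mul. pose proof (Hcoord q Hq). pose proof (Cabs_ge0 (M i q)). nra.
Qed.

Lemma opnorm_is_lub n M : is_lub (opnorm_set n M) (opnorm n M).
Proof.
  unfold opnorm. apply epsilon_spec.
  destruct (completeness (opnorm_set n M)) as [m Hm]; [| |exists m; exact Hm].
  - exists (row_abs_bound n M). intros t [x [Hx ->]]. apply vnorm_mapply_le, Hx.
  - exists (vnorm n (mapply n M (fun _ => C0))), (fun _ => C0). split; [|reflexivity].
    unfold vnorm. rewrite (Rsum_ext n _ (fun _ => 0)), Rsum_const, Rmult_0_r, sqrt_0; [lra|].
    intros; unfold Cnorm2, C0; simpl; ring.
Qed.

Lemma opnorm_le_row_abs_bound n M : opnorm n M <= row_abs_bound n M.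
Proof.
  apply (proj2 (opnorm_is_lub n M)). intros t [x [Hx ->]]. apply vnorm_mapply_le, Hx.
Qed.

(* Test the norm against the basis vector [e_k]. *)
Lemma Cabs_entry_le_opnorm n M k : (k < n)%nat -> Cabs (M O k) <= opnorm n M.
Proof.
  intros Hk. eapply Rle_trans; [|apply (proj1 (opnorm_is_lub n M))].
  2:{ exists (mono k C1). split; [|reflexivity].
      unfold vnorm. rewrite (Rsum_single n _ k), mono_eq; [|lia|].
      - unfold Cnorm2, C1; simpl. replace (1 * 1 + 0 * 0) with 1 by ring. rewrite sqrt_1. lra.
      - intros q _ Hq. rewrite mono_neq by auto. unfold Cnorm2, C0; simpl; ring. }
  unfold Cabs, vnorm. apply sqrt_le_1_alt.
  eapply Rle_trans; [|apply (Rsum_ge_term n _ O)]; [| lia | intros; apply Cnorm2_ge0].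
  unfold mapply. rewrite (Csum_single n _ k), mono_eq; [right; f_equal; ring | lia |].
  intros q _ Hq. rewrite mono_neq by auto. ring.
Qed.

Lemma opnorm_mscalar_le n t : opnorm n (mscalar n t) <= sqrt (INR n) * Cabs t.
Proof.
  eapply Rle_trans; [apply opnorm_le_row_abs_bound|]. unfold row_abs_bound.
  rewrite (Rsum_ext n _ (fun _ => Rsqr (Cabs t))).
  - rewrite Rsum_const, sqrt_mult_alt, sqrt_Rsqr by (apply pos_INR || apply Cabs_ge0).
    lra.
  - intros i Hi. f_equal. rewrite (Rsum_single n _ i); [| lia |].
    + unfold mscalar. rewrite Nat.eqb_refl. destruct (Nat.ltb_spec i n); [reflexivity|lia].
    + intros q _ Hq. unfold mscalar. destruct (Nat.eqb_spec i q); [lia|]. apply Cabs_C0.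
Qed.

Lemma opnorm_small_mscalar n delta : 0 < delta ->
  exists m : nat, (0 < m)%nat /\ opnorm n (mscalar n (Creal (/ INR m))) < delta.
Proof.
  intros Hd. set (s := sqrt (INR n)). assert (0 <= s) by apply sqrt_pos.
  destruct (archimed_cor1 (delta / (s + 1))) as [m [Hm Hm0]];
    [apply Rdiv_lt_0_compat; lra|].
  exists m; split; [exact Hm0|].
  assert (Hr : 0 < / INR m) by (apply Rinv_0_lt_compat, lt_0_INR; auto).
  eapply Rle_lt_trans; [apply opnorm_mscalar_le|]. fold s. rewrite Cabs_Creal by lra.
  apply (Rmult_lt_compat_r (s + 1)) in Hm; [|lra].
  unfold Rdiv in Hm. rewrite Rmult_assoc, Rinv_l in Hm by lra. nra.
Qed.

(** * Unipotent sequences *)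

Definition shift (p : nat) (a : nat -> Cx) : nat -> Cx :=
  fun i => if Nat.ltb i p then C0 else a (i - p)%nat.

Lemma shift_conv p a i : shift p a i = conv (mono p C1) a i.
Proof.
  rewrite conv_mono_l. unfold shift.
  destruct (Nat.ltb_spec i p); destruct (Nat.leb_spec p i); try lia; ring.
Qed.

Lemma mono_succ p i : mono (S p) C1 i = conv (mono 1 C1) (mono p C1) i.
Proof.
  rewrite conv_mono_l. unfold mono.
  destruct (Nat.leb_spec 1 i); destruct (Nat.eqb_spec i (S p));
  destruct (Nat.eqb_spec (i - 1) p); try lia; ring.
Qed.

(* [unip j u] says [u = 1 + O(S^j)]. *)
Definition unip (j : nat) (u : nat -> Cx) : Prop :=
  u O = C1 /\ forall i, (0 < i < j)%nat -> u i = C0.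

Lemma conv_unip j u v i : unip j u -> (0 < i <= j)%nat ->
  conv u v i = Cadd (Cmul (u i) (v O)) (Cmul (u O) (v i)).
Proof.
  intros [H0 Hu] Hi. unfold conv.
  rewrite Csum_ends by (lia || (intros q Hq; rewrite Hu by lia; ring)).
  rewrite Nat.sub_0_r, Nat.sub_diag. ring.
Qed.

Lemma unip_conv j u v : (1 <= j)%nat -> unip j u -> unip j v ->
  unip j (conv u v) /\ conv u v j = Cadd (u j) (v j).
Proof.
  intros Hj Eu Ev. pose proof Eu as [Hu0 Hu]. pose proof Ev as [Hv0 Hv]. split; [split|].
  - unfold conv; simpl. rewrite Hu0, Hv0. ring.
  - intros i Hi. rewrite (conv_unip j u v i), (Hu i), (Hv i) by (auto; lia). ring.
  - rewrite (conv_unip j u v j), Hu0, Hv0 by (auto; lia). ring.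
Qed.

Lemma unip_succ j u : unip j u -> u j = C0 -> unip (S j) u.
Proof.
  intros [H0 H] Hu. split; [exact H0|]. intros i Hi.
  destruct (Nat.eq_dec i j); [subst; exact Hu | apply H; lia].
Qed.

(* The coefficient sequence of [1 + x S^j]. *)
Definition elem (j : nat) (x : Cx) : nat -> Cx := fun i => Cadd (mono 0 C1 i) (mono j x i).

Lemma elem_unip j x : (1 <= j)%nat -> unip j (elem j x).
Proof.
  intros Hj. split.
  - unfold elem. rewrite mono_eq, mono_neq by lia. ring.
  - intros i Hi. unfold elem. rewrite !mono_neq by lia. ring.
Qed.

Lemma elem_at j x : (1 <= j)%nat -> elem j x j = x.
Proof. intros Hj. unfold elem. rewrite mono_eq, mono_neq by lia. ring. Qed.

(** * Multiplicative maps on the algebra *)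

Section MultiplicativeMap.

Variable n : nat.
Variable phi : Mat -> Mat.
Hypothesis phi_maps : forall M, inA n M -> inA n (phi M).
Hypothesis phi_mul : forall M N, inA n M -> inA n N -> phi (mmul n M N) = mmul n (phi M) (phi N).
Hypothesis phi_cont : continuous_on_A n phi.
Hypothesis phi_S : phi (Sblock n) = Sblock n.
Hypothesis phi_scalar : forall a : Cx, phi (mscalar n a) = mscalar n a.

(* [Phi a] is the coefficient sequence of [phi (toep n a)]; only its first [n]
   terms are meaningful. *)
Definition Phi (a : nat -> Cx) : nat -> Cx := fun i => phi (toep n a) O i.

Lemma phi_toep a : phi (toep n a) = toep n (Phi a).
Proof. apply inA_toep, phi_maps, toep_inA. Qed.

Lemma Phi_ext a b : (forall i, (i < n)%nat -> a i = b i) -> forall i, Phi a i = Phi b i.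
Proof. intros H i. unfold Phi. rewrite (toep_ext n a b H). reflexivity. Qed.

Lemma Phi_conv a b i : (i < n)%nat -> Phi (conv a b) i = conv (Phi a) (Phi b) i.
Proof.
  intros Hi. unfold Phi at 1.
  rewrite <- toep_mul, phi_mul, !phi_toep, toep_mul, toep_row0 by (auto || apply toep_inA).
  reflexivity.
Qed.

Lemma Phi_const t i : (i < n)%nat -> Phi (mono 0 t) i = mono 0 t i.
Proof.
  intros Hi. unfold Phi.
  rewrite <- mscalar_toep, phi_scalar, mscalar_toep, toep_row0 by auto. reflexivity.
Qed.

Lemma Phi_scale t a i : (i < n)%nat -> Phi (fun j => Cmul t (a j)) i = Cmul t (Phi a i).
Proof.
  intros Hi. rewrite (Phi_ext _ (conv (mono 0 t) a)) by (intros; symmetry; apply conv_const_l).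
  rewrite Phi_conv, (conv_ext _ (mono 0 t) _ (Phi a)), conv_const_l
    by (auto || (intros; apply Phi_const; lia)).
  reflexivity.
Qed.

Lemma Phi_mono p i : (i < n)%nat -> Phi (mono p C1) i = mono p C1 i.
Proof.
  revert i. induction p as [|p IHp]; intros i Hi; [apply Phi_const, Hi|].
  rewrite (Phi_ext _ (conv (mono 1 C1) (mono p C1))) by (intros; apply mono_succ).
  rewrite Phi_conv, mono_succ by auto. apply conv_ext; intros q Hq.
  - unfold Phi. rewrite <- Sblock_toep, phi_S, Sblock_toep, toep_row0 by lia. reflexivity.
  - apply IHp; lia.
Qed.

Lemma Phi_shift p a i : (i < n)%nat -> Phi (shift p a) i = shift p (Phi a) i.
Proof.
  intros Hi. rewrite (Phi_ext _ (conv (mono p C1) a)) by (intros; apply shift_conv).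
  rewrite Phi_conv, shift_conv by auto. apply conv_ext; intros q Hq; [|reflexivity].
  apply Phi_mono; lia.
Qed.

(* Shifting by [n - 1 - k] moves coefficient [k] to the last position, where the
   truncation to the first [n] terms only sees [a_0, ..., a_k]. *)
Lemma Phi_causal k a b : (k < n)%nat -> (forall i, (i <= k)%nat -> a i = b i) ->
  Phi a k = Phi b k.
Proof.
  intros Hk H. set (p := (n - 1 - k)%nat).
  assert (Hlast : forall c, Phi c k = shift p (Phi c) (n - 1)).
  { intros c. unfold shift. destruct (Nat.ltb_spec (n - 1) p); [lia|]. f_equal. unfold p; lia. }
  rewrite !Hlast, <- !Phi_shift by lia. apply Phi_ext. intros i Hi. unfold shift.
  destruct (Nat.ltb_spec i p); [reflexivity|]. apply H. unfold p in *; lia.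
Qed.

Lemma Phi_head a : (0 < n)%nat -> Phi a O = a O.
Proof.
  intros Hn. rewrite (Phi_causal 0 a (mono 0 (a O))), Phi_const, mono_eq by
    (auto; intros i Hi; replace i with O by lia; rewrite mono_eq; reflexivity).
  reflexivity.
Qed.

Definition fixes_below (k : nat) : Prop := forall i, (i < k)%nat -> forall a, Phi a i = a i.

Section Coefficient.

Variable k : nat.
Hypothesis k_pos : (1 <= k)%nat.
Hypothesis k_lt_n : (k < n)%nat.
Hypothesis IHk : fixes_below k.

(* Sequences with [a_0 = 0] are multiples of [S]. *)
Lemma Phi_shifted a : a O = C0 -> Phi a k = a k.
Proof.
  intros Ha0. rewrite (Phi_ext a (shift 1 (fun i => a (S i)))).
  - rewrite Phi_shift by auto. unfold shift. destruct (Nat.ltb_spec k 1); [lia|].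
    rewrite IHk by lia. f_equal; lia.
  - intros i _. unfold shift. destruct (Nat.ltb_spec i 1).
    + replace i with O by lia. exact Ha0.
    + f_equal; lia.
Qed.

Definition defect (u : nat -> Cx) : Cx := Csub (Phi u k) (u k).

Lemma defect_ext u u' : (forall i, u i = u' i) -> defect u = defect u'.
Proof. intros H. unfold defect. rewrite (Phi_ext u u'), H by auto. reflexivity. Qed.

(* All cross terms of the convolution involve coefficients of index [< k],
   which [Phi] fixes. *)
Lemma defect_conv u v : u O = C1 -> v O = C1 ->
  defect (conv u v) = Cadd (defect u) (defect v).
Proof.
  intros Hu Hv. unfold defect. rewrite Phi_conv by auto. unfold conv.
  rewrite <- Csum_sub, Csum_ends by
    (lia || (intros q Hq; cbv beta; rewrite (IHk q), (IHk (k - q)%nat) by lia; ring)).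
  rewrite Nat.sub_0_r, Nat.sub_diag, (IHk O), (IHk O), Hu, Hv by lia. ring.
Qed.

(* If [Phi (1 + m w)] deviates from [1 + m w] by [m c] at index [k], then
   [Phi (w + I/m)] stays at distance [|c|] from [Phi w] while [w + I/m -> w]. *)
Lemma defect_linear_zero w c : w O = C0 ->
  (forall m, (0 < m)%nat ->
     defect (fun i => Cadd (mono 0 C1 i) (Cmul (Creal (INR m)) (w i)))
     = Cmul (Creal (INR m)) c) ->
  c = C0.
Proof.
  intros Hw0 Hlin. apply NNPP; intros Hc.
  destruct (phi_cont (toep n w) (toep_inA n w) (Cabs c) (Cabs_gt0 c Hc)) as [delta [Hd Hclose]].
  destruct (opnorm_small_mscalar n delta Hd) as [m [Hm0 Hsmall]].
  set (t := Creal (/ INR m)). set (mm := Creal (INR m)).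
  set (b := fun i => Cadd (w i) (mono 0 t i)).
  assert (Htm : Cmul t mm = C1).
  { unfold t, mm. rewrite Creal_mul, Rinv_l; [reflexivity|]. apply not_0_INR; lia. }
  specialize (Hclose (toep n b) (toep_inA n b)).
  rewrite msub_toep, (toep_ext n _ (mono 0 t)), <- mscalar_toep in Hclose
    by (intros i _; unfold b; ring).
  specialize (Hclose Hsmall). rewrite !phi_toep, msub_toep in Hclose.
  assert (Hentry : Csub (Phi b k) (Phi w k) = c).
  { set (u := fun i => Cadd (mono 0 C1 i) (Cmul mm (w i))).
    assert (HPu : Phi u k = Cmul mm (Cadd (w k) c)).
    { specialize (Hlin m Hm0). fold mm u in Hlin. unfold defect in Hlin.
      transitivity (Cadd (Csub (Phi u k) (u k)) (u k)); [ring|].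
      rewrite Hlin. unfold u. rewrite mono_neq by lia. ring. }
    assert (Hbu : forall i, (i < n)%nat -> b i = Cmul t (u i)).
    { intros i _. unfold b, u. destruct (Nat.eq_dec i 0) as [->|Hi].
      - rewrite Hw0, !mono_eq. ring.
      - rewrite !mono_neq by auto. transitivity (Cmul (Cmul t mm) (w i)); [rewrite Htm|]; ring. }
    rewrite (Phi_ext b _ Hbu), Phi_scale, HPu, (Phi_shifted w Hw0) by auto.
    transitivity (Csub (Cadd (Cmul (Cmul t mm) (w k)) (Cmul (Cmul t mm) c)) (w k)); [ring|].
    rewrite Htm. ring. }
  pose proof (Cabs_entry_le_opnorm n (toep n (fun i => Csub (Phi b i) (Phi w i))) k k_lt_n)
    as Hle.
  rewrite toep_row0, Hentry in Hle by auto. lra.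
Qed.

Section Level.

Variable j : nat.
Hypothesis j_pos : (1 <= j)%nat.
Hypothesis defect_next : forall u, unip (S j) u -> defect u = C0.

(* Multiplying by [1 - u_j S^j] kills the [S^j] term of [u]. *)
Lemma defect_unip_elem u : unip j u -> defect u = defect (elem j (u j)).
Proof.
  assert (Hcancel : forall u, unip j u -> Cadd (defect u) (defect (elem j (Copp (u j)))) = C0).
  { intros v Hv. pose proof (elem_unip j (Copp (v j)) j_pos) as He.
    destruct (unip_conv j _ _ j_pos Hv He) as [Hc Hcj].
    rewrite <- defect_conv by (apply (proj1 Hv) || apply (proj1 He)).
    apply defect_next, unip_succ; [exact Hc|]. rewrite Hcj, elem_at by auto. ring. }
  intros Hu. pose proof (Hcancel u Hu) as H1.
  pose proof (Hcancel _ (elem_unip j (u j) j_pos)) as H2. rewrite elem_at in H2 by auto.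
  set (d := defect (elem j (Copp (u j)))) in *.
  transitivity (Cadd (Csub (Cadd (defect u) d) (Cadd (defect (elem j (u j))) d))
                     (defect (elem j (u j)))); [ring|].
  rewrite H1, H2. ring.
Qed.

Lemma defect_elem_add v w :
  defect (elem j (Cadd v w)) = Cadd (defect (elem j v)) (defect (elem j w)).
Proof.
  pose proof (elem_unip j v j_pos) as Hv. pose proof (elem_unip j w j_pos) as Hw.
  destruct (unip_conv j _ _ j_pos Hv Hw) as [Hc Hcj].
  rewrite !elem_at in Hcj by auto.
  rewrite <- Hcj, <- (defect_unip_elem _ Hc). apply defect_conv; [apply Hv | apply Hw].
Qed.

Lemma defect_elem_nat_mul m v :
  defect (elem j (Cmul (Creal (INR m)) v)) = Cmul (Creal (INR m)) (defect (elem j v)).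
Proof.
  induction m as [|m IHm].
  - replace (Cmul (Creal (INR 0)) v) with C0 by (apply Cx_eq; simpl; ring).
    rewrite (defect_ext _ (mono 0 C1)).
    + unfold defect. rewrite Phi_const, mono_neq by lia. apply Cx_eq; simpl; ring.
    + intros i. unfold elem, mono. destruct (Nat.eqb i j); ring.
  - replace (Cmul (Creal (INR (S m))) v) with (Cadd (Cmul (Creal (INR m)) v) v)
      by (rewrite S_INR; apply Cx_eq; simpl; ring).
    rewrite defect_elem_add, IHm, S_INR. apply Cx_eq; simpl; ring.
Qed.

Lemma defect_elem_zero v : defect (elem j v) = C0.
Proof.
  apply (defect_linear_zero (mono j v)); [apply mono_neq; lia|]. intros m _.
  rewrite <- defect_elem_nat_mul. apply defect_ext. intros i.
  unfold elem, mono. destruct (Nat.eqb i j); ring.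
Qed.

End Level.

Lemma defect_unip_zero d j : (j + d = S k)%nat -> (1 <= j)%nat ->
  forall u, unip j u -> defect u = C0.
Proof.
  revert j. induction d as [|d IHd]; intros j Hjd Hj u Hu.
  - unfold defect. rewrite (Phi_causal k u (mono 0 C1)), Phi_const, mono_neq, (proj2 Hu) by
      (lia || (intros i Hi; destruct (Nat.eq_dec i 0) as [->|];
               [rewrite mono_eq; apply Hu | rewrite mono_neq by auto; apply Hu; lia])).
    ring.
  - assert (Hnext : forall u, unip (S j) u -> defect u = C0) by (apply IHd; lia).
    rewrite (defect_unip_elem j Hj Hnext u Hu). apply defect_elem_zero; assumption.
Qed.

End Coefficient.

Lemma Phi_coef k : (k < n)%nat -> fixes_below k -> forall a, Phi a k = a k.
Proof.
  intros Hk IHk a. destruct k as [|k]; [apply Phi_head; lia|].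
  destruct (classic (a O = C0)) as [Ha|Ha]; [apply Phi_shifted; auto; lia|].
  set (u := fun i => Cmul (Cinv (a O)) (a i)).
  assert (Hua : forall i, a i = Cmul (a O) (u i)).
  { intros i. unfold u. transitivity (Cmul (Cmul (Cinv (a O)) (a O)) (a i)); [|ring].
    rewrite Cinv_l by auto. ring. }
  rewrite (Phi_ext a (fun i => Cmul (a O) (u i))), Phi_scale, (Hua (S k)) by auto.
  f_equal. transitivity (Cadd (defect (S k) u) (u (S k))); [unfold defect; ring|].
  rewrite (defect_unip_zero (S k) ltac:(lia) Hk IHk (S k) 1); [ring|lia|lia|].
  split; [apply Cinv_l; auto | intros; lia].
Qed.

Lemma Phi_id k : (k < n)%nat -> forall a, Phi a k = a k.
Proof.
  assert (Hall : forall l, (l <= n)%nat -> fixes_below l).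
  { induction l as [|l IHl]; intros Hl i Hi; [lia|].
    destruct (Nat.eq_dec i l) as [->|]; [apply Phi_coef; [|apply IHl]|apply IHl]; lia. }
  intros Hk. apply (Hall (S k)); lia.
Qed.

End MultiplicativeMap.

Theorem lemma2p3 (n : nat) (phi : Mat -> Mat)
  (Hmaps : forall M, inA n M -> inA n (phi M))
  (Hmul : forall M N, inA n M -> inA n N -> phi (mmul n M N) = mmul n (phi M) (phi N))
  (Hcont : continuous_on_A n phi)
  (HS : phi (Sblock n) = Sblock n)
  (Hscal : forall a : Cx, phi (mscalar n a) = mscalar n a) :
  forall M, inA n M -> phi M = M.
Proof.
  intros M HM. rewrite (inA_toep n M HM), (phi_toep n phi Hmaps).
  apply toep_ext. intros k Hk. exact (Phi_id n phi Hmaps Hmul Hcont HS Hscal k Hk _).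
Qed.
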